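(* Let $\alpha_a$ be a labeled dGL hybrid game, $S$ an Angelic subvalue map for $\alpha_a$ and $\varphi$ a formula compatible with $S$ (i.e. $\models S(\mathsf{end})\rightarrow\varphi$). Then every state satisfying $\langle\alpha\rangle\varphi$ satisfies $\langle\mathcal{U}(\alpha_a,S)\rangle\varphi$.
   Context: Differential game logic (dGL). Hybrid games are generated by $\alpha,\beta ::= x:=e \mid \alpha;\beta \mid ?Q \mid \{x'=f(x)\,\&\,Q\} \mid \alpha^{*} \mid \alpha\cup\beta \mid x:=* \mid\ !Q \mid \{x'=f(x)\,\&\,Q\}^{d} \mid \alpha^{\times} \mid \alpha\cap\beta \mid x:=\otimes$, with $x$ a real variable (vector for ODEs), $e,f(x)$ polynomial terms, $Q$ a formula. Players Angel and Demon: $x:=e$ deterministic assignment; in $x:=*$ Angel (in $x:=\otimes$ Demon) assigns any real; in $\{x'=f(x)\&Q\}$ Angel (in $\{\cdot\}^d$ Demon) chooses a duration $r\ge 0$ of following the ODE with $Q$ true throughout; $?Q$ makes Angel lose and $!Q$ makes Demon lose if $Q$ is false; in $\alpha\cup\beta$ Angel (in $\alpha\cap\beta$ Demon) chooses the branch; in $\alpha^*$ Angel (in $\alpha^\times$ Demon) decides before each iteration whether to repeat or stop; $\alpha;\beta$ sequential. Formulas: polynomial (in)equalities closed under connectives, real quantifiers, and modalities $\langle\alpha\rangle\varphi$ (Angel can win $\alpha$ reaching $\varphi$) and $[\alpha]\varphi\equiv\neg\langle\alpha\rangle\neg\varphi$, with the standard dGL winning-region semantics ($\langle x:=*\rangle\varphi\leftrightarrow\exists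 x\varphi$, $\langle x:=\otimes\rangle\varphi\leftrightarrow\forall x\varphi$, $\langle ?Q\rangle\varphi\leftrightarrow Q\wedge\varphi$, $\langle !Q\rangle\varphi\leftrightarrow(Q\rightarrow\varphi)$, $\cup$ as disjunction, $\cap$ as conjunction, $\langle\alpha;\beta\rangle\varphi\leftrightarrow\langle\alpha\rangle\langle\beta\rangle\varphi$, Angel ODE existential, Demon ODE universal over durations/solutions staying in $Q$, $\langle\alpha^*\rangle$ least and $\langle\alpha^\times\rangle$ greatest fixed point). $\models$ denotes validity. Labels: every node of the syntax tree carries a unique label; $\alpha_a$ has root label $a$; $\mathrm{nodes}(\alpha_a)$ is its set of subgame labels; $\mathsf{end}$ is a special extra label. A map $S$ assigns formulas to a label set containing $\mathrm{nodes}(\alpha_a)\cup\{\mathsf{end}\}$; $S\{\mathsf{end}\mapsto Q\}$ replaces the value at $\mathsf{end}$. $\gamma_g,\delta_d$ denote immediate subgames with root labels $g,d$. Game suffix: $\mathrm{suffix}_a(\alpha_a)=\alpha_a$; for $b\ne a$: for loops $((\gamma_g)^* )_a,((\gamma_g)^\times)_a$ it is $\mathrm{suffix}_b(\gamma_g);\alpha_a$; for $\cup,\cap$ the suffix within the branch containing $b$; for $(\gamma_g;\delta_d)_a$ it is $\mathrm{suffix}_b(\gamma_g);\delta_d$ if $b\in\mathrm{nodes}(\gamma_g)$ else $\mathrm{suffix}_b(\delta_d)$. An Angelic subvalue map for $\alpha_a$ is a map $S$ with $\models S(b)\rightarrow\langle\mathrm{suffix}_b(\alpha_a)\rangle S(\mathsf{end})$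 for all $b\in\mathrm{nodes}(\alpha_a)$. Universal projection $\mathcal{U}(\alpha_a,S)$: $(x:=* )_a\mapsto (x:=\otimes)_a;\,!S(\mathsf{end})$; $\{x'=f(x)\&Q\}_a\mapsto(\{x'=f(x)\&Q\}^d)_a;\,!S(\mathsf{end})$; $(\gamma_g\cup\delta_d)_a\mapsto(!S(g);\mathcal{U}(\gamma_g,S))\cap(!S(d);\mathcal{U}(\delta_d,S))$; $((\gamma_g)^* )_a\mapsto(!S(g);\mathcal{U}(\gamma_g,S\{\mathsf{end}\mapsto S(a)\}))^{\times};\,!S(\mathsf{end})$; $(\gamma_g;\delta_d)_a\mapsto\mathcal{U}(\gamma_g,S\{\mathsf{end}\mapsto S(d)\});\mathcal{U}(\delta_d,S)$; $(\gamma_g\cap\delta_d)_a\mapsto\mathcal{U}(\gamma_g,S)\cap\mathcal{U}(\delta_d,S)$; $((\gamma_g)^\times)_a\mapsto\mathcal{U}(\gamma_g,S\{\mathsf{end}\mapsto S(a)\})^\times$; $x:=e,x:=\otimes,?Q,!Q,\{x'=f(x)\&Q\}^d$ unchanged (labels preserved, new nodes fresh labels). *)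

From Stdlib Require Import Reals List.
Open Scope R_scope.

Definition var := nat.
Definition lbl := nat.
Definition state := var -> R.

Inductive term : Type :=
| TVar   : var -> term
| TConst : R -> term
| TNeg   : term -> term
| TPlus  : term -> term -> term
| TMinus : term -> term -> term
| TTimes : term -> term -> term.

Inductive fml : Type :=
| FTrue  : fml
| FFalse : fml
| FEq    : term -> term -> fml
| FLe    : term -> term -> fml
| FLt    : term -> term -> fml
| FNot   : fml -> fml
| FAnd   : fml -> fml -> fml
| FOr    : fml -> fml -> fml
| FImp   : fml -> fml -> fml
| FEx    : var -> fml -> fml
| FAll   : var -> fml -> fml
| FDia   : game -> fml -> fml
| FBox   : game -> fml -> fml
with game : Type :=
| GAssign : lbl -> var -> term -> game
| GSeq    : lbl -> game -> game -> game
| GTestA  : lbl -> fml -> game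
| GOdeA   : lbl -> list (var * term) -> fml -> game
| GLoopA  : lbl -> game -> game
| GChoiceA: lbl -> game -> game -> game
| GAnyA   : lbl -> var -> game
| GTestD  : lbl -> fml -> game                           (* !Q *)
| GOdeD   : lbl -> list (var * term) -> fml -> game
| GLoopD  : lbl -> game -> game
| GChoiceD: lbl -> game -> game -> game
| GAnyD   : lbl -> var -> game.

Fixpoint tsem (e : term) (s : state) : R :=
  match e with
  | TVar x => s x
  | TConst c => c
  | TNeg e1 => - tsem e1 s
  | TPlus e1 e2 => tsem e1 s + tsem e2 s
  | TMinus e1 e2 => tsem e1 s - tsem e2 s
  | TTimes e1 e2 => tsem e1 s * tsem e2 s
  end.

Definition upd (s : state) (x : var) (v : R) : state :=
  fun y => if Nat.eqb y x then v else s y.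

Definition ode_sol (ode : list (var * term)) (s : state) (r : R)
  (phi : R -> state) : Prop :=
  (forall y, phi 0 y = s y) /\
  forall t, 0 <= t <= r ->
    (forall y, ~ In y (map fst ode) -> phi t y = s y) /\
    (forall x e, In (x, e) ode ->
       derivable_pt_lim (fun u => phi u x) t (tsem e (phi t))).

(** [fsem phi] is the set of states satisfying phi;
    [gsem alpha X] is Angel's winning region of game alpha for goal X. *)
Fixpoint fsem (f : fml) (s : state) {struct f} : Prop :=
  match f with
  | FTrue => True
  | FFalse => False
  | FEq e1 e2 => tsem e1 s = tsem e2 s
  | FLe e1 e2 => tsem e1 s <= tsem e2 s
  | FLt e1 e2 => tsem e1 s < tsem e2 s
  | FNot f1 => ~ fsem f1 s
  | FAnd f1 f2 => fsem f1 s /\ fsem f2 s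
  | FOr f1 f2 => fsem f1 s \/ fsem f2 s
  | FImp f1 f2 => fsem f1 s -> fsem f2 s
  | FEx x f1 => exists v, fsem f1 (upd s x v)
  | FAll x f1 => forall v, fsem f1 (upd s x v)
  | FDia a f1 => gsem a (fsem f1) s
  | FBox a f1 => ~ gsem a (fun t => ~ fsem f1 t) s
  end
with gsem (g : game) (X : state -> Prop) (s : state) {struct g} : Prop :=
  match g with
  | GAssign _ x e => X (upd s x (tsem e s))
  | GSeq _ a b => gsem a (gsem b X) s
  | GTestA _ Q => fsem Q s /\ X s
  | GTestD _ Q => fsem Q s -> X s
  | GOdeA _ ode Q =>
      exists r phi, 0 <= r /\ ode_sol ode s r phi /\
        (forall t, 0 <= t <= r -> fsem Q (phi t)) /\ X (phi r)
  | GOdeD _ ode Q =>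
      forall r phi, 0 <= r -> ode_sol ode s r phi ->
        (forall t, 0 <= t <= r -> fsem Q (phi t)) -> X (phi r)
  | GChoiceA _ a b => gsem a X s \/ gsem b X s
  | GChoiceD _ a b => gsem a X s /\ gsem b X s
  | GAnyA _ x => exists v, X (upd s x v)
  | GAnyD _ x => forall v, X (upd s x v)
  | GLoopA _ a =>
      (* least fixed point of Z |-> X ∪ gsem a Z *)
      forall Z : state -> Prop,
        (forall t, X t \/ gsem a Z t -> Z t) -> Z s
  | GLoopD _ a =>
      (* greatest fixed point of Z |-> X ∩ gsem a Z *)
      exists Z : state -> Prop,
        (forall t, Z t -> X t /\ gsem a Z t) /\ Z s
  end.

Definition valid (f : fml) : Prop := forall s, fsem f s.

Definition root (g : game) : lbl :=
  match g with
  | GAssign a _ _ | GSeq a _ _ | GTestA a _ | GOdeA a _ _ | GLoopA a _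
  | GChoiceA a _ _ | GAnyA a _ | GTestD a _ | GOdeD a _ _ | GLoopD a _
  | GChoiceD a _ _ | GAnyD a _ => a
  end.

Fixpoint nodes (g : game) : list lbl :=
  match g with
  | GSeq a g1 g2 | GChoiceA a g1 g2 | GChoiceD a g1 g2 =>
      a :: nodes g1 ++ nodes g2
  | GLoopA a g1 | GLoopD a g1 => a :: nodes g1
  | _ => root g :: nil
  end.

Definition uniquely_labelled (g : game) : Prop := NoDup (nodes g).

(** A label not occurring in [g], used for the newly created nodes. *)
Definition fresh (g : game) : lbl := S (list_max (nodes g)).

(** Game suffix suffix_b(alpha); only meaningful for b ∈ nodes(alpha)
    (other cases return an arbitrary default).  [fr] labels new nodes. *)
Fixpoint suffix_aux (fr : lbl) (b : lbl) (g : game) : game :=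
  if Nat.eqb b (root g) then g else
  match g with
  | GLoopA _ g1 | GLoopD _ g1 => GSeq fr (suffix_aux fr b g1) g
  | GChoiceA _ g1 g2 | GChoiceD _ g1 g2 =>
      if in_dec Nat.eq_dec b (nodes g1) then suffix_aux fr b g1
      else suffix_aux fr b g2
  | GSeq _ g1 g2 =>
      if in_dec Nat.eq_dec b (nodes g1) then GSeq fr (suffix_aux fr b g1) g2
      else suffix_aux fr b g2
  | _ => g
  end.

Definition suffix (b : lbl) (g : game) : game := suffix_aux (fresh g) b g.

(** A map S assigns formulas to labels; [None] is the extra label [end]. *)
Definition smap := option lbl -> fml.

Definition S_end (S : smap) : fml := S None.
Definition S_at (S : smap) (b : lbl) : fml := S (Some b).

Definition set_end (S : smap) (Q : fml) : smap :=
  fun l => match l with None => Q | Some b => S (Some b) end.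

Definition angelic_subvalue_map (g : game) (S : smap) : Prop :=
  forall b, In b (nodes g) -> valid (FImp (S_at S b) (FDia (suffix b g) (S_end S))).

Fixpoint uproj_aux (fr : lbl) (g : game) (S : smap) {struct g} : game :=
  match g with
  | GAnyA a x => GSeq fr (GAnyD a x) (GTestD fr (S_end S))
  | GOdeA a ode Q => GSeq fr (GOdeD a ode Q) (GTestD fr (S_end S))
  | GChoiceA a g1 g2 =>
      GChoiceD fr
        (GSeq fr (GTestD fr (S_at S (root g1))) (uproj_aux fr g1 S))
        (GSeq fr (GTestD fr (S_at S (root g2))) (uproj_aux fr g2 S))
  | GLoopA a g1 =>
      GSeq fr
        (GLoopD fr (GSeq fr (GTestD fr (S_at S (root g1)))
                            (uproj_aux fr g1 (set_end S (S_at S a)))))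
        (GTestD fr (S_end S))
  | GSeq a g1 g2 =>
      GSeq fr (uproj_aux fr g1 (set_end S (S_at S (root g2)))) (uproj_aux fr g2 S)
  | GChoiceD a g1 g2 => GChoiceD fr (uproj_aux fr g1 S) (uproj_aux fr g2 S)
  | GLoopD a g1 => GLoopD fr (uproj_aux fr g1 (set_end S (S_at S a)))
  | _ => g
  end.

Definition uproj (g : game) (S : smap) : game := uproj_aux (fresh g) g S.

From Stdlib Require Import Reals List.

(* Induction on the game, generalised over the postcondition: if from every
   node b, S(b) lets Angel win the suffix at b for a goal X, and both X and
   S(end) imply psi, then <alpha>psi implies <U(alpha,S)>psi.  A sequential
   composition is handled by taking <beta>X as the goal and <U(beta,S)>psi as
   the postcondition of its first component.  Angel's choices become Demon's
   in U(alpha,S), but every branch or iteration Demon picks is guarded by a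
   test !S(b), and from S(b) Angel still wins by the subvalue property. *)

Lemma gsem_mono g (X Y : state -> Prop) :
  (forall t, X t -> Y t) -> forall s, gsem g X s -> gsem g Y s.
Proof.
  revert X Y.
  induction g; intros X Y HXY s Hs; simpl in *; auto.
  - eapply IHg1; [|exact Hs]. intros t; apply IHg2; exact HXY.
  - destruct Hs; split; auto.
  - destruct Hs as [r [p [Hr [Hsol [HQ HX]]]]]. exists r, p; auto.
  - intros Z HZ. apply Hs. intros t [Ht|Ht]; apply HZ; auto.
  - destruct Hs as [H|H]; [left; eapply IHg1 | right; eapply IHg2]; eauto.
  - destruct Hs as [w Hw]; exists w; auto.
  - destruct Hs as [Z [HZ Zs]]; exists Z; split; auto.
    intros t Ht; destruct (HZ t Ht); auto.
  - destruct Hs; split; [eapply IHg1 | eapply IHg2]; eauto.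
Qed.

Lemma NoDup_app_disjoint {A} (l1 l2 : list A) x :
  NoDup (l1 ++ l2) -> In x l1 -> ~ In x l2.
Proof.
  induction l1 as [|y l1 IH]; simpl; [tauto|].
  intros Hnd [<-|Hx] Hx2; apply NoDup_cons_iff in Hnd as [Hy Hnd].
  - apply Hy, in_or_app; right; exact Hx2.
  - exact (IH Hnd Hx Hx2).
Qed.

Lemma NoDup_cons_app_l {A} (a : A) l1 l2 : NoDup (a :: l1 ++ l2) -> NoDup l1.
Proof. intros Hnd; apply NoDup_cons_iff in Hnd; exact (NoDup_app_remove_r _ _ (proj2 Hnd)). Qed.

Lemma NoDup_cons_app_r {A} (a : A) l1 l2 : NoDup (a :: l1 ++ l2) -> NoDup l2.
Proof. intros Hnd; apply NoDup_cons_iff in Hnd; exact (NoDup_app_remove_l _ _ (proj2 Hnd)). Qed.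

Lemma NoDup_cons_tail {A} (a : A) l : NoDup (a :: l) -> NoDup l.
Proof. intros Hnd; apply NoDup_cons_iff in Hnd; exact (proj2 Hnd). Qed.

Lemma child_label_neqb a l1 l2 b :
  NoDup (a :: l1 ++ l2) -> In b l1 \/ In b l2 -> Nat.eqb b a = false.
Proof.
  intros Hnd Hb; apply Nat.eqb_neq; intros ->.
  apply NoDup_cons_iff in Hnd as [Ha _].
  apply Ha, in_or_app; exact Hb.
Qed.

Lemma in_nodes_root g : In (root g) (nodes g).
Proof. destruct g; simpl; auto. Qed.

Lemma suffix_aux_root fr g : suffix_aux fr (root g) g = g.
Proof. destruct g; simpl; rewrite Nat.eqb_refl; reflexivity. Qed.

Section UniversalProjection.

Variable fr : lbl.

Definition subvalue_for (g : game) (S : smap) (X : state -> Prop) : Prop :=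
  forall b, In b (nodes g) ->
    forall t, fsem (S_at S b) t -> gsem (suffix_aux fr b g) X t.

Lemma subvalue_root g S X (Y : state -> Prop) :
  subvalue_for g S X -> (forall t, X t -> Y t) ->
  forall t, fsem (S_at S (root g)) t -> gsem g Y t.
Proof.
  intros Hsv HXY t Ht.
  apply (gsem_mono g X Y HXY).
  rewrite <- (suffix_aux_root fr g).
  exact (Hsv _ (in_nodes_root g) t Ht).
Qed.

Lemma subvalue_seq a g1 g2 S X :
  NoDup (nodes (GSeq a g1 g2)) -> subvalue_for (GSeq a g1 g2) S X ->
  subvalue_for g1 S (gsem g2 X) /\ subvalue_for g2 S X.
Proof.
  intros Hnd Hsv; split; intros b Hb t Ht.
  - specialize (Hsv b (in_cons _ _ _ (in_or_app _ _ _ (or_introl Hb))) t Ht).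
    simpl in Hsv; rewrite (child_label_neqb _ _ _ _ Hnd (or_introl Hb)) in Hsv.
    destruct (in_dec Nat.eq_dec b (nodes g1)); [exact Hsv | contradiction].
  - specialize (Hsv b (in_cons _ _ _ (in_or_app _ _ _ (or_intror Hb))) t Ht).
    simpl in Hsv; rewrite (child_label_neqb _ _ _ _ Hnd (or_intror Hb)) in Hsv.
    destruct (in_dec Nat.eq_dec b (nodes g1)) as [Hb1|]; [|exact Hsv].
    exfalso; exact (NoDup_app_disjoint _ _ _ (NoDup_cons_tail _ _ Hnd) Hb1 Hb).
Qed.

Lemma suffix_aux_choice g a g1 g2 b :
  g = GChoiceA a g1 g2 \/ g = GChoiceD a g1 g2 -> Nat.eqb b a = false ->
  suffix_aux fr b g =
    if in_dec Nat.eq_dec b (nodes g1) then suffix_aux fr b g1 else suffix_aux fr b g2.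
Proof. intros [-> | ->] Hba; simpl; rewrite Hba; reflexivity. Qed.

Lemma subvalue_choice g a g1 g2 S X :
  g = GChoiceA a g1 g2 \/ g = GChoiceD a g1 g2 ->
  NoDup (nodes g) -> subvalue_for g S X ->
  subvalue_for g1 S X /\ subvalue_for g2 S X.
Proof.
  intros Hg Hnd Hsv.
  assert (Hnodes : nodes g = a :: nodes g1 ++ nodes g2)
    by (destruct Hg as [-> | ->]; reflexivity).
  unfold subvalue_for in Hsv; rewrite Hnodes in Hnd, Hsv.
  split; intros b Hb t Ht.
  - specialize (Hsv b (in_cons _ _ _ (in_or_app _ _ _ (or_introl Hb))) t Ht).
    rewrite (suffix_aux_choice _ _ _ _ _ Hg (child_label_neqb _ _ _ _ Hnd (or_introl Hb))) in Hsv.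
    destruct (in_dec Nat.eq_dec b (nodes g1)); [exact Hsv | contradiction].
  - specialize (Hsv b (in_cons _ _ _ (in_or_app _ _ _ (or_intror Hb))) t Ht).
    rewrite (suffix_aux_choice _ _ _ _ _ Hg (child_label_neqb _ _ _ _ Hnd (or_intror Hb))) in Hsv.
    destruct (in_dec Nat.eq_dec b (nodes g1)) as [Hb1|]; [|exact Hsv].
    exfalso; exact (NoDup_app_disjoint _ _ _ (NoDup_cons_tail _ _ Hnd) Hb1 Hb).
Qed.

Lemma subvalue_loop g a g1 S X :
  g = GLoopA a g1 \/ g = GLoopD a g1 ->
  NoDup (nodes g) -> subvalue_for g S X -> subvalue_for g1 S (gsem g X).
Proof.
  intros Hg Hnd Hsv b Hb t Ht.
  assert (Hba : Nat.eqb b a = false).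
  { apply Nat.eqb_neq; intros ->.
    destruct Hg as [-> | ->]; apply NoDup_cons_iff in Hnd as [Ha _]; exact (Ha Hb). }
  destruct Hg as [-> | ->];
    specialize (Hsv b (in_cons _ _ _ Hb) t Ht); simpl in Hsv; rewrite Hba in Hsv;
    exact Hsv.
Qed.

Definition uproj_keeps_winning (g : game) : Prop :=
  forall S X (psi : state -> Prop),
    NoDup (nodes g) -> subvalue_for g S X ->
    (forall t, X t -> psi t) -> (forall t, fsem (S_end S) t -> psi t) ->
    forall s, gsem g psi s -> gsem (uproj_aux fr g S) psi s.

Lemma uproj_keeps_winning_seq a g1 g2 :
  uproj_keeps_winning g1 -> uproj_keeps_winning g2 ->
  uproj_keeps_winning (GSeq a g1 g2).
Proof.
  intros IH1 IH2 S X psi Hnd Hsv HX Hend s Hs.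
  destruct (subvalue_seq a g1 g2 S X Hnd Hsv) as [Hsv1 Hsv2].
  assert (Hproj2 : forall t, gsem g2 psi t -> gsem (uproj_aux fr g2 S) psi t)
    by exact (IH2 S X psi (NoDup_cons_app_r _ _ _ Hnd) Hsv2 HX Hend).
  apply (IH1 (set_end S (S_at S (root g2))) (gsem g2 X)).
  - exact (NoDup_cons_app_l _ _ _ Hnd).
  - exact Hsv1.
  - intros t Ht; apply Hproj2; exact (gsem_mono g2 X psi HX t Ht).
  - intros t Ht; apply Hproj2; exact (subvalue_root g2 S X psi Hsv2 HX t Ht).
  - exact (gsem_mono g1 _ _ Hproj2 s Hs).
Qed.

Lemma uproj_keeps_winning_choiceA a g1 g2 :
  uproj_keeps_winning g1 -> uproj_keeps_winning g2 ->
  uproj_keeps_winning (GChoiceA a g1 g2).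
Proof.
  intros IH1 IH2 S X psi Hnd Hsv HX Hend s _.
  destruct (subvalue_choice _ a g1 g2 S X (or_introl eq_refl) Hnd Hsv) as [Hsv1 Hsv2].
  split; intros Ht.
  - apply (IH1 S X psi (NoDup_cons_app_l _ _ _ Hnd) Hsv1 HX Hend).
    exact (subvalue_root g1 S X psi Hsv1 HX s Ht).
  - apply (IH2 S X psi (NoDup_cons_app_r _ _ _ Hnd) Hsv2 HX Hend).
    exact (subvalue_root g2 S X psi Hsv2 HX s Ht).
Qed.

Lemma uproj_keeps_winning_choiceD a g1 g2 :
  uproj_keeps_winning g1 -> uproj_keeps_winning g2 ->
  uproj_keeps_winning (GChoiceD a g1 g2).
Proof.
  intros IH1 IH2 S X psi Hnd Hsv HX Hend s [Hs1 Hs2].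
  destruct (subvalue_choice _ a g1 g2 S X (or_intror eq_refl) Hnd Hsv) as [Hsv1 Hsv2].
  split.
  - exact (IH1 S X psi (NoDup_cons_app_l _ _ _ Hnd) Hsv1 HX Hend s Hs1).
  - exact (IH2 S X psi (NoDup_cons_app_r _ _ _ Hnd) Hsv2 HX Hend s Hs2).
Qed.

(* The projected loop is Demon's; Angel wins it with the trivial invariant,
   since each iteration Demon starts must first pass the test !S(g1). *)
Lemma uproj_keeps_winning_loopA a g1 :
  uproj_keeps_winning g1 -> uproj_keeps_winning (GLoopA a g1).
Proof.
  intros IH S X psi Hnd Hsv _ Hend s _.
  pose proof (subvalue_loop _ a g1 S X (or_introl eq_refl) Hnd Hsv) as Hsv1.
  exists (fun _ => True). split; [|exact I].
  intros t _. split; [exact (Hend t)|]. intros Ht.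
  apply (IH (set_end S (S_at S a)) (gsem (GLoopA a g1) X) (fun _ => True)).
  - exact (NoDup_cons_tail _ _ Hnd).
  - exact Hsv1.
  - intros; exact I.
  - intros; exact I.
  - exact (subvalue_root g1 S _ _ Hsv1 (fun _ _ => I) t Ht).
Qed.

(* Angel's invariant Z for the original loop does not survive the projected
   body, which only guarantees S(a) at its end; but S(a) lies in the winning
   region W of the loop for X, which is an invariant too, so Z \/ W is one. *)
Lemma uproj_keeps_winning_loopD a g1 :
  uproj_keeps_winning g1 -> uproj_keeps_winning (GLoopD a g1).
Proof.
  intros IH S X psi Hnd Hsv HX Hend s [Z [HZ Zs]].
  set (W := gsem (GLoopD a g1) X).
  assert (Hbody : forall t, gsem g1 (fun u => Z u \/ W u) t ->
            gsem (uproj_aux fr g1 (set_end S (S_at S a))) (fun u => Z u \/ W u) t).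
  { apply (IH _ W).
    - exact (NoDup_cons_tail _ _ Hnd).
    - exact (subvalue_loop _ a g1 S X (or_intror eq_refl) Hnd Hsv).
    - intros t Ht; right; exact Ht.
    - intros t Ht; right; exact (subvalue_root (GLoopD a g1) S X X Hsv (fun _ H => H) t Ht). }
  exists (fun u => Z u \/ W u). split; [|left; exact Zs].
  intros t [Ht|[Z0 [HZ0 Z0t]]].
  - destruct (HZ t Ht) as [Hpsi Hstep]. split; [exact Hpsi|].
    apply Hbody; exact (gsem_mono g1 Z _ (fun u Hu => or_introl Hu) t Hstep).
  - destruct (HZ0 t Z0t) as [HXt Hstep]. split; [exact (HX t HXt)|].
    apply Hbody; apply (gsem_mono g1 Z0); [|exact Hstep].
    intros u Hu; right; exists Z0; split; assumption.
Qed.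

Lemma uproj_aux_keeps_winning g : uproj_keeps_winning g.
Proof.
  induction g.
  (* Angel's x:=* and ODE become Demon's, followed by !S(end), which already
     secures psi; the other atomic games are left unchanged. *)
  all: try (intros S X psi _ _ _ Hend s Hs; simpl; solve [auto]).
  - apply uproj_keeps_winning_seq; assumption.
  - apply uproj_keeps_winning_loopA; assumption.
  - apply uproj_keeps_winning_choiceA; assumption.
  - apply uproj_keeps_winning_loopD; assumption.
  - apply uproj_keeps_winning_choiceD; assumption.
Qed.

End UniversalProjection.

Theorem mainTheorem8 (alpha : game) (S : smap) (phi : fml) :
  uniquely_labelled alpha ->
  angelic_subvalue_map alpha S ->
  valid (FImp (S_end S) phi) ->
  forall s : state, fsem (FDia alpha phi) s -> fsem (FDia (uproj alpha S) phi) s.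
Proof.
  intros Huniq Hsv Hend.
  assert (Hsv_end : subvalue_for (fresh alpha) alpha S (fsem (S_end S))) by exact Hsv.
  exact (uproj_aux_keeps_winning (fresh alpha) alpha S (fsem (S_end S)) (fsem phi)
           Huniq Hsv_end Hend Hend).
Qed.
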